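(* Assume the setting below, and let $\gamma=\sup_{W_1\in V_{1,H},W_2\in V_{2,H}}\frac{(T_1W_1,T_2W_2)}{\|T_1W_1\|\,\|T_2W_2\|}$ (with $\|\cdot\|$ the $L^2(\Omega)$ norm), assumed to lie in $(0,1)$. If $$\tau^2\le 2(1-\gamma^2)\inf_{W\in V_{2,H}}\frac{\|W\|_{m_{22}}^2}{\|W\|_{a_{22}}^2},$$ then discretization scheme 1 is stable; that is, the discrete energy $E^{n+\frac12}$ is conserved in $n$ and satisfies $E^{n+\frac12}\ge \|(U_1^{n+1},U_2^{n+1})\|_c^2+\|(U_1^n,U_2^n)\|_c^2+\|(U_1^{n+1},U_2^n)\|_a^2+\|(U_1^n,U_2^{n+1})\|_a^2\ge0$ for all $n\ge0$.
   Context: Let $\Omega\subset\mathbb{R}^d$ be bounded, $\kappa>0$ a coefficient, $a(u,v)=\int_\Omega\kappa\nabla u\cdot\nabla v$, and $(\cdot,\cdot)$ the $L^2(\Omega)$ inner product. $V_{1,H},V_{2,H}$ are finite-dimensional spaces (in the paper $V_{j,H}=\prod_{k\in I_j}V_H$ for a coarse finite element space $V_H$ and a partition $I_1\sqcup I_2$ of the continua indices), with linear maps $T_{j,0},T_{j,1}$ on $V_{j,H}$ and $T_j=T_{j,0}+T_{j,1}$ (in the paper, $T_{j,0}U=\sum_K\mathbf{1}_K\sum_{k\in I_j}\phi_k^KU_k$, $T_{j,1}U=\sum_K\mathbf{1}_K\sum_{k\in I_j}\sum_m\phi_k^{K,m}\partial_{x_m}U_k$ with fixed multiscale basis functions). Bilinear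 forms: $m_{ij}(U,W)=(T_jU,T_iW)$, $a_{ij}(U,W)=a(T_{j,1}U,T_{i,1}W)$, $c_{ij}(U,W)=a(T_{j,0}U,T_{i,0}W)$ for $U\in V_{j,H},W\in V_{i,H}$; $\|W\|_{m_{22}}^2=m_{22}(W,W)$, $\|W\|_{a_{22}}^2=a_{22}(W,W)$; $\|(W_1,W_2)\|_x^2=\sum_{i,j=1}^2x_{ij}(W_j,W_i)$ for $x\in\{m,a,c\}$. Discretization scheme 1 (with zero source, as assumed in the paper's stability analysis), time step $\tau>0$: for $n\ge1$, for all $W_1\in V_{1,H}$, $\tfrac{1}{\tau^2} m_{11}(U_1^{n+1}-2U_1^n+U_1^{n-1},W_1)+\tfrac{1}{\tau^2} m_{12}(U_2^{n+1}-2U_2^n+U_2^{n-1},W_1)+\tfrac12 a_{11}(U_1^{n+1}+U_1^{n-1},W_1)+a_{12}(U_2^n,W_1)+\tfrac12 c_{11}(U_1^{n+1}+U_1^{n-1},W_1)+\tfrac12 c_{12}(U_2^{n+1}+U_2^{n-1},W_1)=0$, and for all $W_2\in V_{2,H}$, $\tfrac{1}{\tau^2} m_{22}(U_2^{n+1}-2U_2^n+U_2^{n-1},W_2)+\tfrac{1}{\tau^2} m_{21}(U_1^{n+1}-2U_1^n+U_1^{n-1},W_2)+a_{21}(U_1^n,W_2)+a_{22}(U_2^n,W_2)+\tfrac12 c_{21}(U_1^{n+1}+U_1^{n-1},W_2)+\tfrac12 c_{22}(U_2^{n+1}+U_2^{n-1},W_2)=0$. Discrete energy: $E^{n+\frac12}=\tfrac{2}{\tau^2}\|(U_1^{n+1}-U_1^n,U_2^{n+1}-U_2^n)\|_m^2+\|(U_1^{n+1},U_2^{n+1})\|_c^2+\|(U_1^n,U_2^n)\|_c^2+\|(U_1^{n+1},U_2^n)\|_a^2+\|(U_1^n,U_2^{n+1})\|_a^2-\|U_2^{n+1}-U_2^n\|_{a_{22}}^2$.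 The infimum is over nonzero $W$. *)

From HB Require Import structures.
From mathcomp Require Import all_boot all_order all_algebra.
From mathcomp Require Import classical_sets reals.
Set Implicit Arguments. Unset Strict Implicit. Unset Printing Implicit Defensive.
Import Order.TTheory GRing.Theory Num.Theory.
Local Open Scope ring_scope.

Section Defs.
Variables (R : realType) (F : lmodType R).

(* A symmetric bilinear form on F (linearity in the first argument plus
   symmetry gives bilinearity). *)
Definition sym_bilinear (b : F -> F -> R) : Prop :=
  (forall u v, b u v = b v u) /\
  (forall (k : R) (u v w : F), b (k *: u + v) w = k * b u w + b v w).

Definition l2norm (ip : F -> F -> R) (u : F) : R := Num.sqrt (ip u u).

(* ||(W1,W2)||_x^2 = sum_{i,j} x_ij(W_j,W_i) where
   x_ij(U,W) = b (S_j U) (S_i W). *)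
Definition pair_sqnorm (V1 V2 : Type) (b : F -> F -> R)
  (S1 : V1 -> F) (S2 : V2 -> F) (W1 : V1) (W2 : V2) : R :=
  b (S1 W1) (S1 W1) + b (S2 W2) (S1 W1) + b (S1 W1) (S2 W2) + b (S2 W2) (S2 W2).

Definition gamma_set (V1 V2 : Type) (ip : F -> F -> R)
  (T1 : V1 -> F) (T2 : V2 -> F) : set R :=
  [set r | exists W1 W2, T1 W1 != 0 /\ T2 W2 != 0 /\
      r = ip (T1 W1) (T2 W2) / (l2norm ip (T1 W1) * l2norm ip (T2 W2))].

Variables (V1 V2 : lmodType R)
  (ip a : F -> F -> R)
  (T10 T11 : V1 -> F) (T20 T21 : V2 -> F) (tau : R)
  (U1 : nat -> V1) (U2 : nat -> V2).

Definition T1 (U : V1) : F := T10 U + T11 U.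
Definition T2 (U : V2) : F := T20 U + T21 U.

(* Discretization scheme 1 (zero source), equations for n >= 1. *)
Definition scheme1 : Prop :=
  forall n : nat, (1 <= n)%N ->
  (forall W1 : V1,
     tau^-2 * ip (T1 (U1 n.+1 - U1 n *+ 2 + U1 n.-1)) (T1 W1)
   + tau^-2 * ip (T2 (U2 n.+1 - U2 n *+ 2 + U2 n.-1)) (T1 W1)
   + 2^-1 * a (T11 (U1 n.+1 + U1 n.-1)) (T11 W1)
   + a (T21 (U2 n)) (T11 W1)
   + 2^-1 * a (T10 (U1 n.+1 + U1 n.-1)) (T10 W1)
   + 2^-1 * a (T20 (U2 n.+1 + U2 n.-1)) (T10 W1) = 0) /\
  (forall W2 : V2,
     tau^-2 * ip (T2 (U2 n.+1 - U2 n *+ 2 + U2 n.-1)) (T2 W2)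
   + tau^-2 * ip (T1 (U1 n.+1 - U1 n *+ 2 + U1 n.-1)) (T2 W2)
   + a (T11 (U1 n)) (T21 W2)
   + a (T21 (U2 n)) (T21 W2)
   + 2^-1 * a (T10 (U1 n.+1 + U1 n.-1)) (T20 W2)
   + 2^-1 * a (T20 (U2 n.+1 + U2 n.-1)) (T20 W2) = 0).

(* The part of E^{n+1/2} made of c- and a-norms. *)
Definition energy_lower (n : nat) : R :=
    pair_sqnorm a T10 T20 (U1 n.+1) (U2 n.+1)
  + pair_sqnorm a T10 T20 (U1 n) (U2 n)
  + pair_sqnorm a T11 T21 (U1 n.+1) (U2 n)
  + pair_sqnorm a T11 T21 (U1 n) (U2 n.+1).

Definition energy (n : nat) : R :=
    2 / tau ^+ 2 * pair_sqnorm ip T1 T2 (U1 n.+1 - U1 n) (U2 n.+1 - U2 n)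
  + energy_lower n
  - a (T21 (U2 n.+1 - U2 n)) (T21 (U2 n.+1 - U2 n)).

End Defs.

From Pilot Require Import Defs.
From HB Require Import structures.
From mathcomp Require Import all_boot all_order all_algebra.
From mathcomp Require Import classical_sets reals.
From mathcomp Require Import boolp lra.
Import Order.TTheory GRing.Theory Num.Theory.
Set Implicit Arguments. Unset Strict Implicit. Unset Printing Implicit Defensive.
Local Open Scope ring_scope.

(* Testing scheme 1 at step n+1 with U^{n+2} - U^n, the mass terms become the
   increment of the kinetic part of the energy (|x|^2 - |y|^2 = (x - y, x + y))
   and the stiffness terms the increment of the remaining part, so E^{n+1/2} is
   conserved.  For the lower bound, the strengthened Cauchy-Schwarz inequality
   gives ||(W1, W2)||_m^2 >= (1 - gamma^2) ||W2||_{m22}^2, and the CFL condition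
   turns this into 2/tau^2 ||(W1, W2)||_m^2 >= ||W2||_{a22}^2, which absorbs the
   only negative term of the energy. *)

Section SymBilinear.
Variables (R : realType) (F : lmodType R) (b : F -> F -> R).
Hypothesis bS : sym_bilinear b.

Lemma bilinC u v : b u v = b v u.
Proof. exact: bS.1. Qed.

Lemma bilinDl u v w : b (u + v) w = b u w + b v w.
Proof. by have := bS.2 1 u v w; rewrite scale1r mul1r. Qed.

Lemma bilin0l w : b 0 w = 0.
Proof. by have := bilinDl 0 0 w; rewrite addr0; lra. Qed.

Lemma bilinNl u w : b (- u) w = - b u w.
Proof. by have := bS.2 (-1) u 0 w; rewrite addr0 bilin0l addr0 scaleN1r mulN1r. Qed.

Lemma bilinDr u v w : b w (u + v) = b w u + b w v.
Proof. by rewrite bilinC bilinDl !(bilinC _ w). Qed.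

Lemma bilinNr u w : b w (- u) = - b w u.
Proof. by rewrite bilinC bilinNl bilinC. Qed.

Lemma bilin0r w : b w 0 = 0.
Proof. by rewrite bilinC bilin0l. Qed.

Lemma pair_sqnormE (V1 V2 : Type) (S1 : V1 -> F) (S2 : V2 -> F) W1 W2 :
  pair_sqnorm b S1 S2 W1 W2 = b (S1 W1 + S2 W2) (S1 W1 + S2 W2).
Proof. by rewrite /pair_sqnorm bilinDl !bilinDr; lra. Qed.

Lemma pair_sqnorm_ge0 (V1 V2 : Type) (S1 : V1 -> F) (S2 : V2 -> F) W1 W2 :
  (forall u, 0 <= b u u) -> 0 <= pair_sqnorm b S1 S2 W1 W2.
Proof. by move=> b_ge0; rewrite pair_sqnormE; apply: b_ge0. Qed.

End SymBilinear.

Section SumOfLinear.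
Variables (R : realType) (F V : lmodType R) (S0 S1 : {linear V -> F}).

Lemma T1_is_linear : linear (T1 S0 S1).
Proof. by move=> k x y; rewrite /T1 !linearP scalerDr addrACA. Qed.

HB.instance Definition _ := GRing.isLinear.Build R V F *:%R (T1 S0 S1) T1_is_linear.

End SumOfLinear.

(* Orients every pair [b x y], [b y x] occurring in the goal the same way, so
   that [lra] sees a single atom for it. *)
Ltac bilin_sym_normalize b bS :=
  repeat match goal with
  | |- context [b ?x ?y] => match goal with |- context [b y x] =>
        tryif constr_eq x y then fail else rewrite (bilinC bS x y) end
  end.

Ltac bilin_expand b bS :=
  rewrite ?(bilinDl bS) ?(bilinDr bS) ?(bilinNl bS) ?(bilinNr bS);
  bilin_sym_normalize b bS.

Section LinearMaps.
Variables (R : realType) (U V : lmodType R) (f : {linear U -> V}).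

(* [linearD] and [linearN] restated through the plain coercion of [f]: rewriting
   with them keeps every image [f x] syntactically identical, so that [lra]
   treats equal images as one atom. *)
Lemma linD x y : f (x + y) = f x + f y.
Proof. exact: linearD. Qed.

Lemma linN x : f (- x) = - f x.
Proof. exact: linearN. Qed.

End LinearMaps.

Section EnergyConservation.
Variables (R : realType) (F V1 V2 : lmodType R) (ip a : F -> F -> R)
  (T10 T11 : {linear V1 -> F}) (T20 T21 : {linear V2 -> F})
  (tau : R) (U1 : nat -> V1) (U2 : nat -> V2).
Hypotheses (ipS : sym_bilinear ip) (aS : sym_bilinear a).

Local Notation T1 := (T1 T10 T11).
Local Notation T2 := (T2 T20 T21).
Local Notation energy := (energy ip a T10 T11 T20 T21 tau U1 U2).
Local Notation energy_lower := (energy_lower a T10 T11 T20 T21 U1 U2).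

Lemma mass_increment x1 y1 z1 x2 y2 z2 :
    pair_sqnorm ip T1 T2 (x1 - y1) (x2 - y2)
  - pair_sqnorm ip T1 T2 (y1 - z1) (y2 - z2)
  = ip (T1 (x1 - y1 *+ 2 + z1)) (T1 (x1 - z1))
  + ip (T2 (x2 - y2 *+ 2 + z2)) (T1 (x1 - z1))
  + ip (T2 (x2 - y2 *+ 2 + z2)) (T2 (x2 - z2))
  + ip (T1 (x1 - y1 *+ 2 + z1)) (T2 (x2 - z2)).
Proof.
rewrite /pair_sqnorm /T1 /T2 !mulr2n !linD !linN.
bilin_expand ip ipS; lra.
Qed.

(* The right-hand side is twice the stiffness part of scheme 1 at step n+1
   tested with (Z1, Z2), just as the right-hand side of [mass_increment] is its
   mass part. *)
Lemma stiffness_increment n :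
  let Z1 := U1 n.+2 - U1 n in let Z2 := U2 n.+2 - U2 n in
    energy_lower n.+1 - a (T21 (U2 n.+2 - U2 n.+1)) (T21 (U2 n.+2 - U2 n.+1))
  - (energy_lower n - a (T21 (U2 n.+1 - U2 n)) (T21 (U2 n.+1 - U2 n)))
  = 2 * (2^-1 * a (T11 (U1 n.+2 + U1 n)) (T11 Z1) + a (T21 (U2 n.+1)) (T11 Z1)
       + 2^-1 * a (T10 (U1 n.+2 + U1 n)) (T10 Z1)
       + 2^-1 * a (T20 (U2 n.+2 + U2 n)) (T10 Z1)
       + a (T11 (U1 n.+1)) (T21 Z2) + a (T21 (U2 n.+1)) (T21 Z2)
       + 2^-1 * a (T10 (U1 n.+2 + U1 n)) (T20 Z2)
       + 2^-1 * a (T20 (U2 n.+2 + U2 n)) (T20 Z2)).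
Proof.
rewrite /= /energy_lower /pair_sqnorm !linD !linN.
bilin_expand a aS; lra.
Qed.

Lemma energy_succ n : scheme1 ip a T10 T11 T20 T21 tau U1 U2 -> energy n.+1 = energy n.
Proof.
move=> /(_ n.+1 isT) /= [/(_ (U1 n.+2 - U1 n)) eq1 /(_ (U2 n.+2 - U2 n)) eq2].
have := mass_increment (U1 n.+2) (U1 n.+1) (U1 n) (U2 n.+2) (U2 n.+1) (U2 n).
move=> /(congr1 (fun x => tau^-2 * x)); rewrite /= mulrBr ![RHS]mulrDr => mass.
have := stiffness_increment n => /= stiff.
rewrite /energy -!mulrA; lra.
Qed.

Lemma energy_conserved n : scheme1 ip a T10 T11 T20 T21 tau U1 U2 -> energy n = energy 0.
Proof. by move=> scheme; elim: n => [|n IHn] //; rewrite energy_succ. Qed.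

End EnergyConservation.

Section StrengthenedCauchySchwarz.
Variables (R : realType) (F : lmodType R) (ip : F -> F -> R).
Hypotheses (ipS : sym_bilinear ip) (ip_gt0 : forall u, u != 0 -> 0 < ip u u).

Lemma ip_ge0 u : 0 <= ip u u.
Proof. by have [->|/ip_gt0/ltW//] := eqVneq u 0; rewrite bilin0l. Qed.

Lemma l2normE u : l2norm ip u ^+ 2 = ip u u.
Proof. exact/sqr_sqrtr/ip_ge0. Qed.

Lemma l2normN u : l2norm ip (- u) = l2norm ip u.
Proof. by rewrite /l2norm bilinNl // bilinNr // opprK. Qed.

Lemma l2norm0 : l2norm ip 0 = 0.
Proof. by rewrite /l2norm bilin0l // sqrtr0. Qed.

Lemma sqnormD_ge g u v : - ip u v <= g * l2norm ip u * l2norm ip v ->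
  (1 - g ^+ 2) * ip v v <= ip (u + v) (u + v).
Proof.
move=> uv_ge; rewrite bilinDl // !bilinDr // (bilinC ipS v u) -(l2normE u) -(l2normE v).
have := sqr_ge0 (l2norm ip u - g * l2norm ip v); nra.
Qed.

Lemma gamma_set_le_sup (V1 V2 : Type) (S1 : V1 -> F) (S2 : V2 -> F) W1 W2 :
  0 < sup (gamma_set ip S1 S2) -> S1 W1 != 0 -> S2 W2 != 0 ->
  ip (S1 W1) (S2 W2) / (l2norm ip (S1 W1) * l2norm ip (S2 W2))
    <= sup (gamma_set ip S1 S2).
Proof.
move=> sup_gt0 S1W1_neq0 S2W2_neq0; apply: sup_upper_bound; last by exists W1, W2.
(* [sup] of a set without a supremum is 0. *)
have [//|/sup_out sup0] := pselect (has_sup (gamma_set ip S1 S2)).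
by move: sup_gt0; rewrite sup0 ltxx.
Qed.

Lemma gamma_cauchy_schwarz (V1 V2 : zmodType) (S1 : {additive V1 -> F}) (S2 : V2 -> F)
    g W1 W2 :
  g = sup (gamma_set ip S1 S2) -> 0 < g ->
  - ip (S1 W1) (S2 W2) <= g * l2norm ip (S1 W1) * l2norm ip (S2 W2).
Proof.
move=> g_def g_gt0.
have [->|S1W1_neq0] := eqVneq (S1 W1) 0; first by rewrite bilin0l // l2norm0 oppr0 mulr0 mul0r.
have [->|S2W2_neq0] := eqVneq (S2 W2) 0; first by rewrite bilin0r // l2norm0 oppr0 mulr0.
have norm_gt0 w : w != 0 -> 0 < l2norm ip w by move=> /ip_gt0; rewrite sqrtr_gt0.
have := @gamma_set_le_sup _ _ S1 S2 (- W1) W2; rewrite -g_def raddfN l2normN bilinNl //.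
rewrite -mulrA -ler_pdivrMr ?mulr_gt0 ?norm_gt0 //; apply => //.
by rewrite oppr_eq0.
Qed.

Lemma pair_sqnorm_ge (V1 V2 : zmodType) (S1 : {additive V1 -> F}) (S2 : V2 -> F) g W1 W2 :
  g = sup (gamma_set ip S1 S2) -> 0 < g ->
  (1 - g ^+ 2) * ip (S2 W2) (S2 W2) <= pair_sqnorm ip S1 S2 W1 W2.
Proof. by move=> g_def g_gt0; rewrite pair_sqnormE //; apply/sqnormD_ge/gamma_cauchy_schwarz. Qed.

End StrengthenedCauchySchwarz.

Lemma ler_mul_of_ratio (R : realFieldType) (V : zmodType) (f g : V -> R) t c :
  f 0 = 0 -> (forall W, 0 <= f W) -> (forall W, 0 <= g W) -> 0 <= c ->
  (forall W, W != 0 -> f W != 0 -> t <= c * (g W / f W)) ->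
  forall W, t * f W <= c * g W.
Proof.
move=> f0 f_ge0 g_ge0 c_ge0 ratio_ge W.
have [->|fW_neq0] := eqVneq (f W) 0; first by rewrite mulr0 mulr_ge0.
have W_neq0 : W != 0 by apply: contra_neq fW_neq0 => ->.
have fW_gt0 : 0 < f W by rewrite lt_def fW_neq0 f_ge0.
by have := ratio_ge W W_neq0 fW_neq0; rewrite mulrA ler_pdivlMr.
Qed.

Section EnergyBound.
Variables (R : realType) (F V1 V2 : lmodType R) (ip a : F -> F -> R)
  (T10 T11 : {linear V1 -> F}) (T20 T21 : {linear V2 -> F})
  (tau : R) (U1 : nat -> V1) (U2 : nat -> V2).
Hypothesis (aS : sym_bilinear a).

Local Notation T1 := (T1 T10 T11).
Local Notation T2 := (T2 T20 T21).
Local Notation energy := (energy ip a T10 T11 T20 T21 tau U1 U2).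
Local Notation energy_lower := (energy_lower a T10 T11 T20 T21 U1 U2).

Lemma energy_lower_ge0 n : (forall u, 0 <= a u u) -> 0 <= energy_lower n.
Proof.
by move=> a_ge0; rewrite /Defs.energy_lower; do ![apply: (pair_sqnorm_ge0 aS) | apply: addr_ge0].
Qed.

Lemma energy_lower_le_energy g n : 0 < tau ->
  (forall W, tau ^+ 2 * a (T21 W) (T21 W) <= 2 * (1 - g ^+ 2) * ip (T2 W) (T2 W)) ->
  (forall W1 W2, (1 - g ^+ 2) * ip (T2 W2) (T2 W2) <= pair_sqnorm ip T1 T2 W1 W2) ->
  energy_lower n <= energy n.
Proof.
move=> tau_gt0 stiff_le_mass mass_ge.
have := stiff_le_mass (U2 n.+1 - U2 n); have := mass_ge (U1 n.+1 - U1 n) (U2 n.+1 - U2 n).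
rewrite /energy; set A := a _ _; set K := pair_sqnorm _ _ _ _ _ => K_ge A_le.
suff : A <= 2 / tau ^+ 2 * K by lra.
by rewrite mulrAC ler_pdivlMr ?exprn_gt0 //; lra.
Qed.

End EnergyBound.

Theorem theorem2 (R : realType) (F V1 V2 : lmodType R)
  (ip a : F -> F -> R)
  (T10 T11 : {linear V1 -> F}) (T20 T21 : {linear V2 -> F})
  (tau gamma : R) (U1 : nat -> V1) (U2 : nat -> V2) :
  (* (.,.) : an inner product on F *)
  sym_bilinear ip -> (forall u : F, u != 0 -> 0 < ip u u) ->
  (* a : symmetric positive semidefinite bilinear form on F *)
  sym_bilinear a -> (forall u : F, 0 <= a u u) ->
  0 < tau ->
  gamma = sup (gamma_set ip (T1 T10 T11) (T2 T20 T21)) ->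
  0 < gamma < 1 ->
  (* tau^2 <= 2 (1 - gamma^2) inf_{W <> 0} ||W||_{m22}^2 / ||W||_{a22}^2 *)
  (forall W : V2, W != 0 -> a (T21 W) (T21 W) != 0 ->
     tau ^+ 2 <= 2 * (1 - gamma ^+ 2) *
       (ip (T2 T20 T21 W) (T2 T20 T21 W) / a (T21 W) (T21 W))) ->
  scheme1 ip a T10 T11 T20 T21 tau U1 U2 ->
  forall n : nat,
    energy ip a T10 T11 T20 T21 tau U1 U2 n
      = energy ip a T10 T11 T20 T21 tau U1 U2 0 /\
    energy_lower a T10 T11 T20 T21 U1 U2 n
      <= energy ip a T10 T11 T20 T21 tau U1 U2 n /\
    0 <= energy_lower a T10 T11 T20 T21 U1 U2 n.
Proof.
move=> ipS ip_gt0 aS a_ge0 tau_gt0 gamma_def /andP[gamma_gt0 gamma_lt1] cfl scheme n.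
have cfl_const_ge0 : 0 <= 2 * (1 - gamma ^+ 2).
  by rewrite mulr_ge0 // subr_ge0 expr_le1 ?ltW.
have stiff_le_mass : forall W, tau ^+ 2 * a (T21 W) (T21 W)
    <= 2 * (1 - gamma ^+ 2) * ip (T2 T20 T21 W) (T2 T20 T21 W).
  apply: (ler_mul_of_ratio (f := fun W => a (T21 W) (T21 W))) => //= [|W].
  - by rewrite linear0 bilin0l.
  - exact: ip_ge0.
split; first exact: energy_conserved.
split; last exact: energy_lower_ge0.
apply: (energy_lower_le_energy _ _ _ tau_gt0 stiff_le_mass) => W1 W2.
exact: pair_sqnorm_ge.
Qed.
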